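(* Let $\rho,\sigma\in\mathrm{Rect}^\ast(n)$ and let $\lambda\mapsto\lambda^\ast$ denote conjugation of partitions. Then: (1) $A(\rho^\ast)=A(\rho)^\ast$ and $s(\rho^\ast)=s(\rho)^\ast$; (2) $d_{\mathrm{sup}}(\rho,\sigma)=d_{\mathrm{sup}}(\rho^\ast,\sigma^\ast)$; (3) conjugation maps the support geodesics from $\rho$ to $\sigma$ bijectively onto the support geodesics from $\rho^\ast$ to $\sigma^\ast$, and hence $\mathrm{Corr}_{\mathrm{all}}(\rho^\ast,\sigma^\ast)=\mathrm{Corr}_{\mathrm{all}}(\rho,\sigma)^\ast$.
   Context: The partition graph $G_n$ has as vertices the integer partitions of $n$; two partitions are adjacent if one is obtained from the other by a single elementary unit transfer followed by reordering: decrease one part by $1$ and either increase a different part by $1$ or create a new part equal to $1$, then delete a part that became $0$ and sort in nonincreasing order (the result being different from the original). Conjugation transposes the Ferrers diagram; it is applied elementwise to sets, edges and paths. $\mathrm{Rect}^\ast(n)=\{(a^b):ab=n,\ a,b\ge2\}$, where $(a^b)$ has $b$ parts equal to $a$. For $\rho=(a^b)\in\mathrm{Rect}^\ast(n)$ let $\alpha(\rho)=(a+1,a^{\,b-2},a-1)$ (equal to $(a+1,a-1)$ if $b=2$) and $\beta(\rho)=(a^{\,b-1},a-1,1)$; the attachment pair is $A(\rho)=\{\alpha(\rho),\beta(\rho)\}$ and the support edge is $s(\rho)=\alpha(\rho)\beta(\rho)$. The support distance $d_{\mathrm{sup}}(\rho,\sigma)\in\mathbb N_0\cup\{\infty\}$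 is the minimum of the graph distances in $G_n\setminus\mathrm{Rect}^\ast(n)$ between a vertex of $A(\rho)$ and a vertex of $A(\sigma)$, and $\infty$ if no path in $G_n\setminus\mathrm{Rect}^\ast(n)$ joins them. When $d_{\mathrm{sup}}(\rho,\sigma)<\infty$, a support geodesic from $\rho$ to $\sigma$ is a shortest path in $G_n\setminus\mathrm{Rect}^\ast(n)$ joining some vertex of $A(\rho)$ to some vertex of $A(\sigma)$, i.e. of length $d_{\mathrm{sup}}(\rho,\sigma)$; $\mathrm{Corr}_{\mathrm{all}}(\rho,\sigma)$ is the union of all support geodesics from $\rho$ to $\sigma$, and $\mathrm{Corr}_{\mathrm{all}}(\rho,\sigma)=\varnothing$ if $d_{\mathrm{sup}}(\rho,\sigma)=\infty$. *)

From mathcomp Require Import all_boot all_order.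
From mathcomp Require Import boolp classical_sets.

Set Implicit Arguments.
Unset Strict Implicit.
Unset Printing Implicit Defensive.

Local Open Scope classical_set_scope.

Definition is_part (n : nat) (l : seq nat) : bool :=
  [&& sorted geq l, all (fun x => 0 < x) l & sumn l == n].

(* One elementary unit transfer: decrease part i by 1 and increase part j
   by 1, where j = size l means "create a new part equal to 1"
   (incr_nth pads with a 0); then delete zero parts and sort nonincreasingly. *)
Definition transfer (l : seq nat) (i j : nat) : seq nat :=
  sort geq [seq x <- incr_nth (set_nth 0 l i (nth 0 l i).-1) j | 0 < x].

Definition step (l m : seq nat) : bool :=
  [exists i : 'I_(size l), exists j : 'I_(size l).+1,
     (val i != val j) && (m == transfer l i j)] && (m != l).

Definition adj (n : nat) (l m : seq nat) : bool :=
  [&& is_part n l, is_part n m & step l m || step m l].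

Definition conj (l : seq nat) : seq nat :=
  mkseq (fun k => count (fun x => k < x) l) (foldr maxn 0 l).

(* Rect*(n) = { (a^b) : a*b = n, a,b >= 2 }, (a^b) = b parts equal to a. *)
Definition is_rect (n : nat) (l : seq nat) : Prop :=
  exists a b, [/\ 2 <= a, 2 <= b, a * b = n & l = nseq b a].

Definition alpha (rho : seq nat) : seq nat :=
  let a := head 0 rho in let b := size rho in
  a.+1 :: nseq (b - 2) a ++ [:: a.-1].

Definition beta (rho : seq nat) : seq nat :=
  let a := head 0 rho in let b := size rho in
  nseq (b - 1) a ++ [:: a.-1; 1].

Definition attach (rho : seq nat) : seq (seq nat) := [:: alpha rho; beta rho].
Definition support_edge (rho : seq nat) : seq nat * seq nat := (alpha rho, beta rho).

Definition edge_eq (e f : seq nat * seq nat) : Prop :=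
  (e.1 = f.1 /\ e.2 = f.2) \/ (e.1 = f.2 /\ e.2 = f.1).

Definition edge_conj (e : seq nat * seq nat) : seq nat * seq nat :=
  (conj e.1, conj e.2).

(* A walk x :: q in G_n \ Rect*(n) from a vertex of A(rho) to a vertex of
   A(sigma); its length is size q. *)
Definition supwalk (n : nat) (rho sigma : seq nat) (p : seq (seq nat)) : Prop :=
  match p with
  | [::] => False
  | x :: q =>
      [/\ x \in attach rho, last x q \in attach sigma, path (adj n) x q
        & forall y, y \in p -> is_part n y /\ ~ is_rect n y]
  end.

Definition dsup_pred (n : nat) (rho sigma : seq nat) : pred nat :=
  fun k => `[< exists p, supwalk n rho sigma p /\ size p = k.+1 >].

(* Support distance: Some d, or None for infinity. *)
Definition dsup (n : nat) (rho sigma : seq nat) : option nat :=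
  match pselect (exists k, dsup_pred n rho sigma k) with
  | left H => Some (ex_minn H)
  | right _ => None
  end.

Definition sup_geodesic (n : nat) (rho sigma : seq nat) (p : seq (seq nat)) : Prop :=
  supwalk n rho sigma p /\ dsup n rho sigma = Some (size p).-1.

(* Corr_all(rho,sigma): union of all support geodesics, as a vertex set and
   an edge set (edges stored in both orientations). *)
Definition corr_vert (n : nat) (rho sigma : seq nat) : set (seq nat) :=
  [set x | exists p, sup_geodesic n rho sigma p /\ x \in p].

Definition corr_edge (n : nat) (rho sigma : seq nat) : set (seq nat * seq nat) :=
  [set e | exists p, sup_geodesic n rho sigma p /\
     exists i, i.+1 < size p /\
       edge_eq e (nth [::] p i, nth [::] p i.+1)].

From mathcomp Require Import all_boot all_order.
From mathcomp Require Import boolp classical_sets.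
From mathcomp Require Import zify.
Local Open Scope classical_set_scope.
Set Implicit Arguments.
Unset Strict Implicit.
Unset Printing Implicit Defensive.

(* Conjugation is an involution of the partitions of n which preserves adjacency in
   G_n and the set Rect*(n), and exchanges the attachment vertices: for rho = (a^b),
   conj rho = (b^a), conj (alpha rho) = beta (conj rho) and conj (beta rho) = alpha (conj rho).
   Hence it maps the admissible walks between A(rho) and A(sigma) bijectively and
   length-preservingly onto those between A(conj rho) and A(conj sigma).
   Adjacency is preserved because conj l records the counts #{i | l_i > k}: lowering a
   part x by one and raising a part y by one changes these counts by -[k = x - 1] and
   +[k = y], so, on zero-padded sequences, conj l and conj m again differ by moving a
   single unit from one coordinate to another, and that is a unit transfer. *)

Lemma leq_foldr_max l x : x \in l -> x <= foldr maxn 0 l.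
Proof.
elim: l => [|y l IH] //=; rewrite in_cons => /orP [/eqP ->|/IH].
  exact: leq_maxl.
by move=> le_x; rewrite leq_max le_x orbT.
Qed.

Lemma nth_conj l k : nth 0 (conj l) k = count (fun x => k < x) l.
Proof.
rewrite /conj; case: (ltnP k (foldr maxn 0 l)) => k_max; first by rewrite nth_mkseq.
rewrite nth_default ?size_mkseq //; apply/esym/eqP.
rewrite eqn0Ngt -has_count; apply/hasPn => x /leq_foldr_max x_max.
by rewrite -leqNgt (leq_trans x_max).
Qed.

Lemma conj_pos l : all (fun x => 0 < x) (conj l).
Proof.
apply/(all_nthP 0) => k; rewrite size_mkseq => k_max.
rewrite nth_mkseq // -has_count; elim: l k_max => [|x l IH] //=.
by rewrite leq_max => /orP [->|/IH ->]; rewrite ?orbT.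
Qed.

Lemma conj_sorted l : sorted geq (conj l).
Proof.
rewrite /conj /mkseq sorted_map; apply: sub_sorted (iota_ltn_sorted 0 _).
by move=> k k' /= lt_kk'; apply: sub_count => x /=; apply: ltn_trans.
Qed.

Lemma geq_trans : transitive geq.
Proof. exact: rev_trans leq_trans. Qed.

Lemma ltn_nth_conj l i k : sorted geq l -> (i < nth 0 (conj l) k) = (k < nth 0 l i).
Proof.
rewrite nth_conj; elim: l i => [|x l IH] i /=; first by rewrite nth_nil.
move=> sorted_xl; have le_x := order_path_min geq_trans sorted_xl.
have [lt_kx|le_xk] := ltnP k x.
  by case: i => [|i] //=; rewrite add1n ltnS IH ?(path_sorted sorted_xl).
have -> : count (fun y => k < y) l = 0.
  apply/eqP; rewrite -leqn0 leqNgt -has_count; apply/hasPn => y /(allP le_x) /= le_yx.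
  by rewrite -leqNgt (leq_trans le_yx).
case: i => [|i] /=; first by rewrite [k < x]ltnNge le_xk.
apply/esym/negbTE; rewrite -leqNgt (leq_trans _ le_xk) //.
have [lt_il|le_li] := ltnP i (size l); last by rewrite nth_default.
exact: (allP le_x) _ (mem_nth 0 lt_il).
Qed.

Lemma pos_nth l i : all (fun x => 0 < x) l -> i < size l -> 0 < nth 0 l i.
Proof. by move=> /allP l_pos lt_il; apply/l_pos/mem_nth. Qed.

Lemma eq_from_nth0_pos l m : all (fun x => 0 < x) l -> all (fun x => 0 < x) m ->
  (forall i, nth 0 l i = nth 0 m i) -> l = m.
Proof.
move=> l_pos m_pos eq_lm; apply: (eq_from_nth (x0 := 0)) => [|i _]; last exact: eq_lm.
apply/anti_leq/andP; split; rewrite leqNgt; apply/negP => lt_size.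
  by have := pos_nth l_pos lt_size; rewrite eq_lm nth_default.
by have := pos_nth m_pos lt_size; rewrite -eq_lm nth_default.
Qed.

Lemma conjK l : sorted geq l -> all (fun x => 0 < x) l -> conj (conj l) = l.
Proof.
move=> l_sorted l_pos; apply: eq_from_nth0_pos => // [|i]; first exact: conj_pos.
have ltn_eq k : (k < nth 0 (conj (conj l)) i) = (k < nth 0 l i).
  by rewrite ltn_nth_conj ?conj_sorted // ltn_nth_conj.
apply/anti_leq/andP; split; rewrite leqNgt; first by rewrite ltn_eq ltnn.
by rewrite -ltn_eq ltnn.
Qed.

Lemma sumn_conj l : sumn (conj l) = sumn l.
Proof.
have count_sum (p : pred nat) s : count p s = \sum_(x <- s) p x.
  by rewrite -sumn_count sumnE big_map.
have sum_ltn x M : \sum_(0 <= k < M) (k < x) = minn x M.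
  elim: M => [|M IH]; first by rewrite big_geq ?minn0.
  by rewrite big_nat_recr //= IH; lia.
rewrite /conj /mkseq sumnE big_map; under eq_bigr do rewrite count_sum.
rewrite exchange_big /= [RHS]sumnE; apply: eq_big_seq => x /leq_foldr_max x_max.
by have := sum_ltn x (foldr maxn 0 l); rewrite /index_iota subn0 => ->; apply/minn_idPl.
Qed.

Lemma part_conj n l : is_part n l -> is_part n (conj l).
Proof.
by case/and3P => _ _ /eqP sum_l; rewrite /is_part conj_sorted conj_pos sumn_conj sum_l /=.
Qed.

Lemma part_conjK n l : is_part n l -> conj (conj l) = l.
Proof. by case/and3P => l_sorted l_pos _; apply: conjK. Qed.

Lemma part_conj_inj n l m : is_part n l -> is_part n m -> conj l = conj m -> l = m.
Proof.
by move=> l_part m_part eq_conj; rewrite -(part_conjK l_part) eq_conj (part_conjK m_part).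
Qed.

Lemma count_set_nth (p : pred nat) s i v : i < size s ->
  count p (set_nth 0 s i v) + p (nth 0 s i) = count p s + p v.
Proof.
elim: s i => [|x s IH] [|i] //= lt_is; first by lia.
by have := IH i lt_is; lia.
Qed.

Lemma count_incr_nth (p : pred nat) s j : ~~ p 0 -> j <= size s ->
  count p (incr_nth s j) + p (nth 0 s j) = count p s + p (nth 0 s j).+1.
Proof.
move=> p0; elim: s j => [|x s IH] [|j] //= le_js; rewrite ?(negbTE p0); try lia.
by have := IH j le_js; lia.
Qed.

Lemma count_transfer (p : pred nat) l i j : (forall x, p x -> 0 < x) ->
  count p (transfer l i j) = count p (incr_nth (set_nth 0 l i (nth 0 l i).-1) j).
Proof.
move=> p_pos; rewrite /transfer (permP (permEl (perm_sort _ _))) count_filter.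
by apply: eq_count => x /=; case p_x: (p x); rewrite //= p_pos.
Qed.

Lemma count_gt_transfer l i j k : all (fun x => 0 < x) l ->
  i < size l -> j <= size l -> i != j ->
  count (fun x => k < x) (transfer l i j) + (k == (nth 0 l i).-1)
  = count (fun x => k < x) l + (k == nth 0 l j).
Proof.
move=> l_pos lt_il le_jl neq_ij.
rewrite count_transfer; last by move=> x; apply: leq_ltn_trans.
have li_pos := pos_nth l_pos lt_il.
have := @count_set_nth (fun x => k < x) l i (nth 0 l i).-1 lt_il.
have := @count_incr_nth (fun x => k < x) (set_nth 0 l i (nth 0 l i).-1) j isT.
rewrite size_set_nth nth_set_nth /= eq_sym (negbTE neq_ij) (maxn_idPr lt_il).
by move=> /(_ le_jl); lia.
Qed.

Definition unit_move (r s : nat) (a b : seq nat) : Prop :=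
  forall k, nth 0 b k + (k == r) = nth 0 a k + (k == s).

Lemma step_unit_move_conj n l m : is_part n l -> is_part n m -> step l m ->
  exists r s, r != s /\ unit_move r s (conj l) (conj m).
Proof.
move=> l_part m_part /andP [/existsP [i /existsP [j /andP [neq_ij /eqP def_m]]] neq_ml].
have /and3P [_ l_pos _] := l_part.
have count_m k : count (fun x => k < x) m + (k == (nth 0 l i).-1)
                 = count (fun x => k < x) l + (k == nth 0 l j).
  by rewrite def_m count_gt_transfer // -ltnS.
exists (nth 0 l i).-1, (nth 0 l j); split; last by move=> k; rewrite !nth_conj.
apply: contra neq_ml => /eqP eq_xy; apply/eqP/(part_conj_inj m_part l_part).
apply: eq_from_nth0_pos; rewrite ?conj_pos // => k.
by rewrite !nth_conj; have := count_m k; rewrite eq_xy; lia.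
Qed.

Lemma count_nth_sum (p : pred nat) s N : ~~ p 0 -> size s <= N ->
  count p s = \sum_(0 <= t < N) p (nth 0 s t).
Proof.
move=> p0; elim: s N => [|x s IH] [|N] //= le_sN.
- by rewrite big_geq.
- by rewrite big1 // => t _; rewrite nth_nil (negbTE p0).
- by rewrite big_nat_recl //= (IH N le_sN).
Qed.

Lemma eq_count_nth (p : pred nat) s s' : ~~ p 0 ->
  (forall t, nth 0 s t = nth 0 s' t) -> count p s = count p s'.
Proof.
move=> p0 eq_ss'; rewrite !(@count_nth_sum _ _ (size s + size s')) ?leq_addl ?leq_addr //.
by apply: eq_bigr => t _; rewrite eq_ss'.
Qed.

Lemma sort_filter_pos_nth (b c : seq nat) : sorted geq b -> all (fun x => 0 < x) b ->
  (forall t, nth 0 c t = nth 0 b t) -> sort geq [seq x <- c | 0 < x] = b.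
Proof.
move=> b_sorted b_pos eq_cb.
apply: (sorted_eq geq_trans) (sort_sorted _ _) b_sorted _.
- by move=> x y /andP [le_yx le_xy]; apply/anti_leq/andP.
- by move=> x y; rewrite /= leq_total.
apply/permP => p; rewrite (permP (permEl (perm_sort _ _))) -(all_filterP b_pos).
by rewrite !count_filter; apply: eq_count_nth; rewrite /= ?andbF.
Qed.

Lemma unit_move_step n a b (r s : nat) : is_part n a -> is_part n b -> r != s ->
  unit_move r s a b -> step a b.
Proof.
move=> /and3P [_ a_pos _] /and3P [b_sorted b_pos _] neq_rs ab.
have ab_r := ab r; rewrite eqxx (negbTE neq_rs) in ab_r.
have ab_s := ab s; rewrite eqxx eq_sym (negbTE neq_rs) in ab_s.
have lt_ra : r < size a by rewrite ltnNge; apply/negP => /(nth_default 0); lia.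
have le_sa : s <= size a.
  rewrite leqNgt; apply/negP => lt_as.
  have lt_sb : s < size b by rewrite ltnNge; apply/negP => /(nth_default 0); lia.
  have := pos_nth b_pos (ltn_trans lt_as lt_sb); have := ab (size a).
  by rewrite (nth_default 0 (leqnn (size a))) (gtn_eqF lt_ra) (ltn_eqF lt_as); lia.
apply/andP; split; last by apply/eqP => eq_ba; move: ab_r; rewrite eq_ba; lia.
apply/existsP; exists (Ordinal lt_ra).
apply/existsP; exists (Ordinal (le_sa : s < (size a).+1)).
rewrite /= neq_rs eq_sym /transfer; apply/eqP/sort_filter_pos_nth => // t.
rewrite nth_incr_nth nth_set_nth /=; have := ab t.
by case: (eqVneq t r) => [->|_]; rewrite eq_sym; lia.
Qed.

Lemma step_conj n l m : is_part n l -> is_part n m -> step l m -> step (conj l) (conj m).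
Proof.
move=> l_part m_part /(step_unit_move_conj l_part m_part) [r [s [neq_rs lm]]].
exact: unit_move_step (part_conj l_part) (part_conj m_part) neq_rs lm.
Qed.

Lemma adj_conj n l m : adj n l m -> adj n (conj l) (conj m).
Proof.
case/and3P => l_part m_part lm; rewrite /adj !part_conj //=.
by case/orP: lm => [/(step_conj l_part m_part)|/(step_conj m_part l_part)] ->; rewrite ?orbT.
Qed.

Lemma part_nseq a b : 0 < a -> is_part (a * b) (nseq b a).
Proof.
move=> a_pos; rewrite /is_part all_nseq a_pos orbT sumn_nseq mulnC eqxx !andbT.
by case: b => //= b; elim: b => //= b ->; rewrite leqnn.
Qed.

Lemma conj_nseq a b : 0 < b -> conj (nseq b a) = nseq a b.
Proof.
move=> b_pos; apply: eq_from_nth0_pos; rewrite ?conj_pos ?all_nseq ?b_pos ?orbT // => k.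
by rewrite nth_conj count_nseq nth_nseq; case: (k < a); rewrite /= ?mul1n.
Qed.

Lemma rect_part n rho : is_rect n rho -> is_part n rho.
Proof. by move=> [a [b [a_ge2 _ <- ->]]]; apply: part_nseq; lia. Qed.

Lemma rect_conj n rho : is_rect n rho -> is_rect n (conj rho).
Proof.
move=> [a [b [a_ge2 b_ge2 ab_n ->]]]; exists b, a; split; rewrite ?conj_nseq //; lia.
Qed.

Lemma rect_conjE n l : is_part n l -> is_rect n (conj l) <-> is_rect n l.
Proof. by move=> l_part; split=> [/rect_conj|/rect_conj //]; rewrite (part_conjK l_part). Qed.

Lemma nth_nseq_cat c v s k :
  nth 0 (nseq c v ++ s) k = if k < c then v else nth 0 s (k - c).
Proof. by rewrite nth_cat size_nseq nth_nseq; case: (k < c). Qed.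

Lemma head_nseq c v : 0 < c -> head 0 (nseq c v) = v.
Proof. by case: c. Qed.

Lemma conj_beta_rect a b : 2 <= a -> 2 <= b -> conj (beta (nseq b a)) = alpha (nseq a b).
Proof.
move=> a_ge2 b_ge2; rewrite /alpha /beta !head_nseq ?size_nseq; try lia.
apply: eq_from_nth0_pos => [||k]; first exact: conj_pos.
  by rewrite /= all_cat all_nseq /= -subn1 subn_gt0 b_ge2 (ltnW b_ge2) orbT.
rewrite nth_conj count_cat count_nseq /=; case: k => [|k] /=; first by lia.
rewrite nth_nseq_cat; case: ifP => lt_ka; first by lia.
by case def_t: (k - (a - 2)) => [|t] /=; rewrite ?nth_nil; lia.
Qed.

Lemma conj_alpha_rect a b : 2 <= a -> 2 <= b -> conj (alpha (nseq b a)) = beta (nseq a b).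
Proof.
move=> a_ge2 b_ge2; rewrite /alpha /beta !head_nseq ?size_nseq; try lia.
apply: eq_from_nth0_pos => [||k]; first exact: conj_pos.
  by rewrite /= all_cat all_nseq /= -subn1 subn_gt0 b_ge2 (ltnW b_ge2) orbT.
rewrite nth_conj /= count_cat count_nseq /= nth_nseq_cat; case: ifP => lt_ka; first by lia.
by case def_t: (k - (a - 1)) => [|[|t]] /=; rewrite ?nth_nil; lia.
Qed.

Lemma conj_attach n rho : is_rect n rho -> attach (conj rho) =i map conj (attach rho).
Proof.
move=> [a [b [a_ge2 b_ge2 _ ->]]] x; rewrite conj_nseq; last by lia.
by rewrite /attach /= conj_alpha_rect // conj_beta_rect // !inE orbC.
Qed.

Lemma conj_support_edge n rho : is_rect n rho ->
  edge_eq (support_edge (conj rho)) (edge_conj (support_edge rho)).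
Proof.
move=> [a [b [a_ge2 b_ge2 _ ->]]]; rewrite conj_nseq; last by lia.
by right; rewrite /= conj_alpha_rect // conj_beta_rect.
Qed.

Lemma supwalk_part n rho sigma p y : supwalk n rho sigma p -> y \in p -> is_part n y.
Proof. by case: p => // x q [_ _ _ p_ok] /p_ok []. Qed.

Lemma supwalk_conjK n rho sigma p : supwalk n rho sigma p -> map conj (map conj p) = p.
Proof.
move=> walk_p; rewrite -map_comp; apply: map_id_in => y /(supwalk_part walk_p).
exact: part_conjK.
Qed.

Lemma supwalk_conj n rho sigma p : is_rect n rho -> is_rect n sigma ->
  supwalk n rho sigma p -> supwalk n (conj rho) (conj sigma) (map conj p).
Proof.
case: p => [|x q] //= rect_rho rect_sigma [x_rho last_sigma q_path p_ok]; split.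
- by rewrite (conj_attach rect_rho) map_f.
- by rewrite last_map (conj_attach rect_sigma) map_f.
- by rewrite path_map; apply: sub_path q_path => y z /adj_conj.
- move=> y'; rewrite -map_cons => /mapP [y y_p ->]; have [y_part y_rect] := p_ok y y_p.
  by rewrite rect_conjE // part_conj.
Qed.

Lemma supwalk_conjV n rho sigma q : is_rect n rho -> is_rect n sigma ->
  supwalk n (conj rho) (conj sigma) q -> supwalk n rho sigma (map conj q).
Proof.
move=> rect_rho rect_sigma /(supwalk_conj (rect_conj rect_rho) (rect_conj rect_sigma)).
by rewrite (part_conjK (rect_part rect_rho)) (part_conjK (rect_part rect_sigma)).
Qed.

Lemma dsup_conj n rho sigma : is_rect n rho -> is_rect n sigma ->
  dsup n rho sigma = dsup n (conj rho) (conj sigma).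
Proof.
move=> rect_rho rect_sigma; rewrite /dsup.
suff -> : dsup_pred n rho sigma = dsup_pred n (conj rho) (conj sigma) by [].
apply: funext => k; apply/asboolP/asboolP => -[p [walk_p size_p]];
  exists (map conj p); rewrite size_map.
  by split; first exact: supwalk_conj.
by split; first exact: supwalk_conjV.
Qed.

Lemma geodesic_conj n rho sigma p : is_rect n rho -> is_rect n sigma ->
  sup_geodesic n rho sigma p -> sup_geodesic n (conj rho) (conj sigma) (map conj p).
Proof.
move=> rect_rho rect_sigma [walk_p dsup_p]; split; first exact: supwalk_conj.
by rewrite size_map -dsup_conj.
Qed.

Lemma geodesic_conjV n rho sigma q : is_rect n rho -> is_rect n sigma ->
  sup_geodesic n (conj rho) (conj sigma) q -> sup_geodesic n rho sigma (map conj q).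
Proof.
move=> rect_rho rect_sigma [walk_q dsup_q]; split; first exact: supwalk_conjV.
by rewrite size_map dsup_conj.
Qed.

Lemma image_involutive_eq (T : Type) (f : T -> T) (A B : set T) :
  f @` A `<=` B -> f @` B `<=` A -> {in B, involutive f} -> B = f @` A.
Proof.
move=> fA_B fB_A f_inv; apply/seteqP; split=> [y B_y|]; last exact: fA_B.
by exists (f y); [apply: fB_A; exists y | rewrite f_inv ?inE].
Qed.

Lemma corr_vert_part n rho sigma x : corr_vert n rho sigma x -> is_part n x.
Proof. by move=> [p [[walk_p _] x_p]]; apply: supwalk_part walk_p x_p. Qed.

Lemma corr_vert_map n rho sigma rho' sigma' :
  (forall p, sup_geodesic n rho sigma p -> sup_geodesic n rho' sigma' (map conj p)) ->
  conj @` corr_vert n rho sigma `<=` corr_vert n rho' sigma'.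
Proof.
move=> geo_map _ [x [p [geo_p x_p]] <-].
by exists (map conj p); split; [apply: geo_map | apply: map_f].
Qed.

Lemma edge_eq_conj e f : edge_eq e f -> edge_eq (edge_conj e) (edge_conj f).
Proof. by case: e f => [e1 e2] [f1 f2] [] [/= -> ->]; [left | right]. Qed.

Lemma corr_edge_part n rho sigma e :
  corr_edge n rho sigma e -> is_part n e.1 /\ is_part n e.2.
Proof.
move=> [p [[walk_p _] [i [lt_ip e_pi]]]].
have part_i j : j < size p -> is_part n (nth [::] p j).
  by move/(mem_nth [::])/(supwalk_part walk_p).
by case: e_pi => -[-> ->]; split; apply: part_i; lia.
Qed.

Lemma corr_edge_map n rho sigma rho' sigma' :
  (forall p, sup_geodesic n rho sigma p -> sup_geodesic n rho' sigma' (map conj p)) ->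
  edge_conj @` corr_edge n rho sigma `<=` corr_edge n rho' sigma'.
Proof.
move=> geo_map _ [e [p [geo_p [i [lt_ip e_pi]]]] <-].
exists (map conj p); split; first exact: geo_map.
exists i; rewrite size_map; split => //.
by rewrite !(nth_map [::]) ?(ltnW lt_ip) //; apply: edge_eq_conj e_pi.
Qed.

Theorem proposition4p10 (n : nat) (rho sigma : seq nat) :
  is_rect n rho -> is_rect n sigma ->
  (* (1) *)
  ((attach (conj rho) =i map conj (attach rho)) /\
   edge_eq (support_edge (conj rho)) (edge_conj (support_edge rho))) /\
  (* (2) *)
  dsup n rho sigma = dsup n (conj rho) (conj sigma) /\
  (* (3) conjugation is a bijection between the support geodesics *)
  ((forall p, sup_geodesic n rho sigma p ->
              sup_geodesic n (conj rho) (conj sigma) (map conj p)) /\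
   (forall p p', sup_geodesic n rho sigma p -> sup_geodesic n rho sigma p' ->
              map conj p = map conj p' -> p = p') /\
   (forall q, sup_geodesic n (conj rho) (conj sigma) q ->
              exists p, sup_geodesic n rho sigma p /\ q = map conj p)) /\
  (* hence the Corr_all identity *)
  (corr_vert n (conj rho) (conj sigma) = conj @` corr_vert n rho sigma /\
   corr_edge n (conj rho) (conj sigma) = edge_conj @` corr_edge n rho sigma).
Proof.
move=> rect_rho rect_sigma.
have geo := geodesic_conj rect_rho rect_sigma.
have geoV := geodesic_conjV rect_rho rect_sigma.
split; first by split; [apply: conj_attach rect_rho | apply: conj_support_edge rect_rho].
split; first exact: dsup_conj.
split.
  split; first exact: geo.
  split=> [p p' [walk_p _] [walk_p' _] eq_pp' | q geo_q].
    by rewrite -(supwalk_conjK walk_p) eq_pp' (supwalk_conjK walk_p').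
  by exists (map conj q); rewrite (supwalk_conjK geo_q.1); split; first exact: geoV.
split; apply: image_involutive_eq.
- exact: corr_vert_map geo.
- exact: corr_vert_map geoV.
- by move=> x /[!inE] /corr_vert_part /part_conjK.
- exact: corr_edge_map geo.
- exact: corr_edge_map geoV.
- move=> [x y] /[!inE] /corr_edge_part [/part_conjK conjK_x /part_conjK conjK_y].
  by rewrite /edge_conj /= conjK_x conjK_y.
Qed.
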